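(* Let $\Omega\subseteq\mathbb{R}^d$ be a convex compact set, and for $t\in\mathbb{R}$ let $\Omega_t=\{x\in\mathbb{R}^{d-1}:(x,t)\in\Omega\}$. Let $\eta>\max_{t\in\mathbb{R}}|\Omega_t|$ and let $\Lambda\subseteq\mathbb{R}^{d-1}$ be an $\eta$-universal sampling set. Then there exist $0<A\le B<\infty$ such that for every $t\in\mathbb{R}$, $\Lambda$ is a set of stable sampling for $\mathcal{B}_{\Omega_t}$ with bounds $A,B$.
   Context: $|\Omega_t|$ is $(d-1)$-dimensional Lebesgue measure. Fourier transform on $\mathbb{R}^n$: $\widehat f(\omega)=\int f(r)e^{-2\pi i\langle\omega,r\rangle}dr$; for closed $S\subseteq\mathbb{R}^n$, $\mathcal{B}_S=\{f\in L^2(\mathbb{R}^n):\widehat f=0\text{ a.e. outside }S\}$. $\Lambda$ is a set of stable sampling for $\mathcal{B}_S$ with bounds $A,B$ if $A\|f\|_2^2\le\sum_{\lambda\in\Lambda}|f(\lambda)|^2\le B\|f\|_2^2$ for all $f\in\mathcal{B}_S$. Beurling densities of $\Lambda\subseteq\mathbb{R}^n$: $D^-(\Lambda)=\liminf_{a\to\infty}\inf_x\#(\Lambda\cap B_a^n(x))/|B_a^n|$, $D^+(\Lambda)=\limsup_{a\to\infty}\sup_x\#(\Lambda\cap B_a^n(x))/|B_a^n|$. Given $\eta>0$, an $\eta$-universal sampling set in $\mathbb{R}^n$ is a set $\Lambda$ with uniform density $D^-(\Lambda)=D^+(\Lambda)=\eta$ that is a set of stable sampling for $\mathcal{B}_S$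 for every compact $S\subseteq\mathbb{R}^n$ with $|S|<\eta$ (the bounds may depend on $S$). *)

From HB Require Import structures.
From mathcomp Require Import all_boot all_order all_algebra.
From mathcomp Require Import all_classical all_reals all_analysis.

Set Implicit Arguments.
Unset Strict Implicit.
Unset Printing Implicit Defensive.

Import Order.TTheory GRing.Theory Num.Theory.
Import numFieldNormedType.Exports.

Local Open Scope classical_set_scope.
Local Open Scope ring_scope.

Section Defs.
Variable R : realType.

(* Measure theory is done on n.-tuple R, which mathcomp-analysis       *)
(* equips with the product (= Borel) sigma-algebra; the two are        *)
(* identified by the bijection [to_row].                               *)

Definition to_row (n : nat) (x : n.-tuple R) : 'rV[R]_n := \row_i tnth x i.

(* n-dimensional Lebesgue measure on (Borel sets of) R^n, defined as the
   iterated product of the 1-dimensional Lebesgue measure: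
   lebn 0 = Dirac mass at the unique point of R^0,
   lebn (n+1) A = \int lebn n (section of A at x) dx  (product measure). *)
Fixpoint lebn (n : nat) : set (n.-tuple R) -> \bar R :=
  match n return set (n.-tuple R) -> \bar R with
  | 0%N => fun A => (\1_A [tuple] : R)%:E
  | m.+1 => fun A =>
      (\int[@lebesgue_measure R]_x lebn [set t : m.-tuple R | A [tuple of x :: t]])%E
  end.

Definition lebRn (n : nat) (A : set 'rV[R]_n) : \bar R :=
  lebn (@to_row n @^-1` A).

Definition intRn (n : nat) (D : set 'rV[R]_n) (f : 'rV[R]_n -> \bar R) : \bar R :=
  (\int[@lebn n]_(x in @to_row n @^-1` D) f (@to_row n x))%E.

Definition measurableRn (n : nat) (f : 'rV[R]_n -> R) : Prop :=
  measurable_fun [set: n.-tuple R] (f \o @to_row n).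

Definition dotRn (n : nat) (u v : 'rV[R]_n) : R := \sum_i u 0 i * v 0 i.

Definition eball (n : nat) (x : 'rV[R]_n) (a : R) : set 'rV[R]_n :=
  [set y | dotRn (y - x) (y - x) <= a ^+ 2].

Definition dens_ratio (n : nat) (L : set 'rV[R]_n) (a : R) (x : 'rV[R]_n) : \bar R :=
  (counting (L `&` eball x a) * ((fine (lebRn (eball (0 : 'rV[R]_n) a)))^-1)%:E)%E.

Definition lower_density (n : nat) (L : set 'rV[R]_n) : \bar R :=
  ereal_sup [set ereal_inf [set ereal_inf [set dens_ratio L a x | x in [set: 'rV[R]_n]]
                           | a in [set a | b <= a]]
            | b in [set b : R | 0 < b]].

Definition upper_density (n : nat) (L : set 'rV[R]_n) : \bar R :=
  ereal_inf [set ereal_sup [set ereal_sup [set dens_ratio L a x | x in [set: 'rV[R]_n]]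
                           | a in [set a | b <= a]]
            | b in [set b : R | 0 < b]].

(* For F = Fr + i Fi : R^n -> C, the function
     f(x) = \int_S F(w) e^{2 pi i <w,x>} dw,
   i.e. the (continuous representative of the) inverse Fourier transform of F.
   These are its real and imaginary parts. *)
Definition pw_re (n : nat) (S : set 'rV[R]_n) (Fr Fi : 'rV[R]_n -> R) (x : 'rV[R]_n) : R :=
  fine (intRn S (fun w => (Fr w * cos (2 * pi * dotRn w x)
                         - Fi w * sin (2 * pi * dotRn w x))%:E)).

Definition pw_im (n : nat) (S : set 'rV[R]_n) (Fr Fi : 'rV[R]_n -> R) (x : 'rV[R]_n) : R :=
  fine (intRn S (fun w => (Fr w * sin (2 * pi * dotRn w x)
                         + Fi w * cos (2 * pi * dotRn w x))%:E)).

Definition pw_abs2 (n : nat) (S : set 'rV[R]_n) (Fr Fi : 'rV[R]_n -> R) (x : 'rV[R]_n) : R :=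
  pw_re S Fr Fi x ^+ 2 + pw_im S Fr Fi x ^+ 2.

(* F = Fr + i Fi is a (Borel representative of an) element of L^2(R^n)
   vanishing outside S; for compact S the functions f as above (with such F)
   are exactly the continuous representatives of the elements of B_S. *)
Definition L2_supported_in (n : nat) (S : set 'rV[R]_n) (Fr Fi : 'rV[R]_n -> R) : Prop :=
  [/\ measurableRn Fr, measurableRn Fi,
      (forall w, ~ S w -> Fr w = 0 /\ Fi w = 0) &
      (intRn [set: 'rV[R]_n] (fun w => (Fr w ^+ 2 + Fi w ^+ 2)%:E) < +oo)%E].

Definition stable_sampling (n : nat) (S : set 'rV[R]_n) (L : set 'rV[R]_n) (A B : R) : Prop :=
  forall Fr Fi : 'rV[R]_n -> R, L2_supported_in S Fr Fi ->
    let nf := intRn [set: 'rV[R]_n] (fun x => (pw_abs2 S Fr Fi x)%:E) in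
    let sm := (\esum_(l in L) (pw_abs2 S Fr Fi l)%:E)%E in
    (A%:E * nf <= sm)%E /\ (sm <= B%:E * nf)%E.

Definition universal_sampling (n : nat) (eta : R) (L : set 'rV[R]_n) : Prop :=
  [/\ lower_density L = eta%:E, upper_density L = eta%:E &
      forall S : set 'rV[R]_n, compact S -> (lebRn S < eta%:E)%E ->
        exists A B : R, [/\ 0 < A, A <= B & stable_sampling S L A B]].

Definition slice (n : nat) (Om : set 'rV[R]_(n + 1)) (t : R) : set 'rV[R]_n :=
  [set x | Om (row_mx x (t%:M : 'rV[R]_1))].

Definition convex_Rn (m : nat) (Om : set 'rV[R]_m) : Prop :=
  forall x y (l : R), Om x -> Om y -> 0 <= l -> l <= 1 ->
    Om (l *: x + (1 - l) *: y).

End Defs.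

(* Compactness of [Om] makes its slices upper semicontinuous: every slice near
   [t] lies in a thin closed neighbourhood of [Om_t], and since Lebesgue measure
   is continuous along decreasing compact sets such a neighbourhood still has
   measure below [eta].  Universality gives sampling bounds for it, hence for
   all nearby slices, and compactness of the projection of [Om] to the last
   coordinate makes these local bounds uniform; the other slices are empty.  Lebesgue measure being the iterated integral
   [lebn], its finiteness, monotonicity and continuity on compact sets are
   proved by induction on the dimension, measurability of the sections
   following from the same upper semicontinuity. *)

From HB Require Import structures.
From mathcomp Require Import all_boot all_order all_algebra.
From mathcomp Require Import all_classical all_reals all_analysis.
From mathcomp Require Import measurable_realfun.

Import Order.TTheory GRing.Theory Num.Theory.
Import numFieldNormedType.Exports.

Local Open Scope classical_set_scope.
Local Open Scope ring_scope.

Set Implicit Arguments.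
Unset Strict Implicit.
Unset Printing Implicit Defensive.

Section fiber.
Context {T U V : topologicalType}.
Variables (C : set T) (p : T -> U) (q : T -> V).
Hypotheses (hU : hausdorff_space U) (cC : compact C).
Hypotheses (cp : continuous p) (cq : continuous q).

Definition fiber (u : U) : set V := q @` (C `&` p @^-1` [set u]).

Lemma fiber_compact u : compact (fiber u).
Proof.
apply: continuous_compact; first exact: continuous_subspaceT.
apply: compact_closedI => //; apply: preimage_closed => [z _|]; first exact: cp.
exact/accessible_closed_set1/hausdorff_accessible.
Qed.

Lemma fiber_set0 u : ~ (p @` C) u -> fiber u = set0.
Proof.
by move=> nCu; apply/seteqP; split => // v [y [Cy pyu] _]; apply: nCu; exists y.
Qed.

(* The fibers are upper semicontinuous: the points over which some fiber leaves
   [O] are the projection of the compact set [C `&` q @^-1` ~` O], which is closed. *)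
Lemma fiber_near_open (O : set V) u : open O -> fiber u `<=` O ->
  \forall u' \near u, fiber u' `<=` O.
Proof.
move=> oO uO; pose F := C `&` q @^-1` (~` O).
have cF : compact F.
  apply: compact_closedI => //; apply: preimage_closed => [z _|]; first exact: cq.
  by rewrite closedC.
have clpF : closed (p @` F).
  by apply: compact_closed => //; exact/continuous_compact/cF/continuous_subspaceT.
have nFu : ~ (p @` F) u.
  by case=> y [Cy nOy] pyu; apply: nOy; apply: uO; exists y.
have := closed_openC clpF; rewrite openE => /(_ u nFu).
apply: filterS => u' nFu' _ [y [Cy pyu'] <-].
by apply: contrapT => nOy; apply: nFu'; exists y.
Qed.

End fiber.

Section thickening.
Variables (R : realType) (V : normedModType R).
Implicit Types (K : set V) (e : R).

Definition thickening K e := [set y | exists2 x, K x & `|y - x| < e].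
Definition closed_thickening K e := [set y | exists2 x, K x & `|y - x| <= e].

Lemma open_thickening K e : open (thickening K e).
Proof.
rewrite openE => y [x Kx yx]; apply/nbhs_ballP; exists (e - `|y - x|) => /=.
  by rewrite subr_gt0.
move=> z; rewrite -ball_normE /= ltrBrDr => yz; exists x => //.
by rewrite -(subrKA y); apply: le_lt_trans (ler_normD _ _) _; rewrite -normrN opprB.
Qed.

Lemma thickening_sub_closed K e : thickening K e `<=` closed_thickening K e.
Proof. by move=> y [x Kx /ltW]; exists x. Qed.

Lemma sub_thickening K e : 0 < e -> K `<=` thickening K e.
Proof. by move=> e0 x Kx; exists x; rewrite ?subrr ?normr0. Qed.

Lemma le_closed_thickening K e e' : e <= e' ->
  closed_thickening K e `<=` closed_thickening K e'.
Proof. by move=> ee' y [x Kx yx]; exists x => //; exact: le_trans ee'. Qed.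

Lemma bigcap_closed_thickening K : closed K ->
  \bigcap_k closed_thickening K k.+1%:R^-1 = K.
Proof.
move=> clK; apply/seteqP; split => [y Ky|x Kx k _]; last first.
  by exists x; rewrite ?subrr ?normr0.
rewrite (closure_id K).1 // => B /nbhs_ballP[r /= r0 rB].
have [k kr] : exists k : nat, k.+1%:R^-1 < r.
  exists (Num.truncn r^-1); rewrite invf_plt ?posrE //; exact: truncnS_gt.
have [x Kx yx] := Ky k I; exists x; split => //; apply: rB.
by rewrite -ball_normE /=; exact: le_lt_trans kr.
Qed.

End thickening.

Lemma closed_thickening_compact (R : realType) n (K : set 'rV[R]_n) e :
  compact K -> compact (closed_thickening K e).
Proof.
move=> cK; have -> : closed_thickening K e =
    (fun z => z.1 + z.2) @` (K `*` [set v | `|v| <= e]).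
  apply/seteqP; split => [y [x Kx yx]|_ [[x v] [/= Kx ve] <-]].
    by exists (x, y - x); rewrite //= addrC subrK.
  by exists x; rewrite // addrAC subrr add0r.
apply: continuous_compact; first exact/continuous_subspaceT/add_continuous.
apply: compact_setX => //; apply: bounded_closed_compact.
  apply: filterS (nbhs_pinfty_ge (num_real e)) => M eM v /= ve.
  exact: le_trans eM.
apply: (@preimage_closed _ _ (fun v : 'rV[R]_n => `|v|) [set r | r <= e]).
  by move=> v _; exact: norm_continuous.
exact: closed_le.
Qed.

Section coordinates.
Variable R : realType.

Lemma continuous_lsubmx_coord m n1 n2 i j :
  continuous (fun y : 'M[R]_(m, n1 + n2) => lsubmx y i j).
Proof.
move=> y; apply: (@continuous_comp _ _ _ lsubmx (fun M : 'M[R]_(m, n1) => M i j)).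
  exact: continuous_lsubmx.
exact: coord_continuous.
Qed.

Lemma continuous_rsubmx_coord m n1 n2 i j :
  continuous (fun y : 'M[R]_(m, n1 + n2) => rsubmx y i j).
Proof.
move=> y; apply: (@continuous_comp _ _ _ rsubmx (fun M : 'M[R]_(m, n2) => M i j)).
  exact: continuous_rsubmx.
exact: coord_continuous.
Qed.

Definition row_section m (C : set 'rV[R]_(1 + m)) (x : R) : set 'rV[R]_m :=
  [set r | C (row_mx x%:M r)].

Lemma row_sectionE m (C : set 'rV[R]_(1 + m)) x :
  row_section C x = fiber C (fun y => lsubmx y 0 0) rsubmx x.
Proof.
apply/seteqP; split => [r Cr|_ [y [Cy /= <-] <-]].
  by exists (row_mx x%:M r); rewrite /= ?row_mxKl ?row_mxKr ?mxE ?mulr1n.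
by rewrite /row_section /= -mx11_scalar hsubmxK.
Qed.

Lemma sliceE n (Om : set 'rV[R]_(n + 1)) t :
  slice Om t = fiber Om (fun y => rsubmx y 0 0) lsubmx t.
Proof.
apply/seteqP; split => [x Omx|_ [y [Omy /= <-] <-]].
  by exists (row_mx x t%:M); rewrite /= ?row_mxKl ?row_mxKr ?mxE ?mulr1n.
by rewrite /slice /= -mx11_scalar hsubmxK.
Qed.

End coordinates.

Section lebRn.
Variable R : realType.
Local Notation leb := (@lebesgue_measure R).

Lemma to_row_cons m (x : R) (t : m.-tuple R) :
  to_row [tuple of x :: t] = (row_mx x%:M (to_row t) : 'rV[R]_(1 + m)).
Proof.
apply/rowP => i; rewrite !mxE; case: splitP => j ij.
  by rewrite (tnth_nth x) /= ij ord1 !mxE eqxx mulr1n.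
by rewrite mxE !(tnth_nth x) /= ij.
Qed.

Lemma lebRn_row_section m (C : set 'rV[R]_(1 + m)) :
  lebRn C = (\int[leb]_x lebRn (row_section C x))%E.
Proof.
apply: eq_integral => x _; congr lebn.
by apply/seteqP; split => t /=; rewrite to_row_cons.
Qed.

Lemma lebRn_ge0 n (A : set 'rV[R]_n) : (0 <= lebRn A)%E.
Proof.
rewrite /lebRn; move: (_ @^-1` A); elim: n {A} => [|m IH] B /=.
  by rewrite lee_fin.
exact: integral_ge0.
Qed.

Lemma lebRn0 n : lebRn (set0 : set 'rV[R]_n) = 0%E.
Proof.
rewrite /lebRn preimage_set0; elim: n => [|m IH] /=; first by rewrite indic0.
by rewrite -[RHS](integral0 leb setT); apply: eq_integral => x _; rewrite -IH.
Qed.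

Lemma lebRn_dim0 (A : set 'rV[R]_0) : lebRn A = ((to_row [tuple] \in A)%:R : R)%:E.
Proof. by rewrite /lebRn /= indicE; congr (_%:R%:E); apply/idP/idP; rewrite !inE. Qed.

End lebRn.

Section lebRn_compact.
Variable R : realType.
Local Notation leb := (@lebesgue_measure R).

Definition lebRn_compact_finite n :=
  forall C : set 'rV[R]_n, compact C -> (lebRn C < +oo)%E.

Definition lebRn_compact_monotone n := forall A B : set 'rV[R]_n,
  compact A -> compact B -> A `<=` B -> (lebRn A <= lebRn B)%E.

Definition lebRn_compact_cvg n := forall C_ : nat -> set 'rV[R]_n,
  (forall k, compact (C_ k)) -> (forall k, C_ k.+1 `<=` C_ k) ->
  lebRn (C_ k) @[k --> \oo] --> lebRn (\bigcap_k C_ k).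

Lemma compact_row_section m (C : set 'rV[R]_(1 + m)) x :
  compact C -> compact (row_section C x).
Proof.
move=> cC; rewrite row_sectionE.
have := @fiber_compact _ _ _ C (fun y => lsubmx y 0 0) rsubmx (@Rhausdorff R) cC.
by apply; [exact: continuous_lsubmx_coord | exact: continuous_rsubmx].
Qed.

Section induction_step.
Variable m : nat.
Hypothesis finite_m : lebRn_compact_finite m.
Hypothesis monotone_m : lebRn_compact_monotone m.
Hypothesis cvg_m : lebRn_compact_cvg m.

Lemma lebRn_closed_thickening_lt (K : set 'rV[R]_m) b : compact K ->
  (lebRn K < b)%E -> exists2 e, 0 < e & (lebRn (closed_thickening K e) < b)%E.
Proof.
move=> cK Kb; have clK : closed K by apply: compact_closed => //; exact: norm_hausdorff.
have inv_shrink k : (k.+2%:R^-1 <= k.+1%:R^-1 :> R).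
  by rewrite lef_pV2 ?posrE ?ler_nat.
have := cvg_m (fun k => @closed_thickening_compact _ _ K k.+1%:R^-1 cK)
  (fun k => le_closed_thickening (inv_shrink k)).
rewrite bigcap_closed_thickening //.
have bnbhs : nbhs (lebRn K) [set y | (y < b)%E].
  by apply: open_nbhs_nbhs; split => //; exact: open_ereal_lt_ereal.
move=> /(_ _ bnbhs) near_lt.
have : \forall k \near \oo, (lebRn (closed_thickening K k.+1%:R^-1) < b)%E := near_lt.
by move=> /filter_ex[k kb]; exists k.+1%:R^-1.
Qed.

Lemma fiber_near_sub_small_compact (T U : topologicalType) (C : set T)
    (p : T -> U) (q : T -> 'rV[R]_m) u b :
  hausdorff_space U -> compact C -> continuous p -> continuous q ->
  (lebRn (fiber C p q u) < b)%E ->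
  exists2 K, compact K /\ (lebRn K < b)%E & \forall u' \near u, fiber C p q u' `<=` K.
Proof.
move=> hU cC cp cq ub.
have cF : compact (fiber C p q u) by exact: fiber_compact.
have [e e0 eb] := lebRn_closed_thickening_lt cF ub.
exists (closed_thickening (fiber C p q u) e).
  by split => //; exact: closed_thickening_compact.
have := fiber_near_open hU cC cp cq (open_thickening (fiber C p q u) e) (sub_thickening e0).
by apply: filterS => u' /subset_trans; apply; exact: thickening_sub_closed.
Qed.

Lemma fiber_near_lebRn_lt (T U : topologicalType) (C : set T)
    (p : T -> U) (q : T -> 'rV[R]_m) u b :
  hausdorff_space U -> compact C -> continuous p -> continuous q ->
  (lebRn (fiber C p q u) < b)%E ->
  \forall u' \near u, (lebRn (fiber C p q u') < b)%E.
Proof.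
move=> hU cC cp cq /(fiber_near_sub_small_compact hU cC cp cq)[K [cK Kb]].
apply: filterS => u' sub; apply: le_lt_trans Kb.
by apply: monotone_m sub => //; exact: fiber_compact.
Qed.

(* Measurability comes from upper semicontinuity of [x |-> |row_section C x|]. *)
Lemma measurable_lebRn_row_section (C : set 'rV[R]_(1 + m)) : compact C ->
  measurable_fun [set: R] (fun x => lebRn (row_section C x)).
Proof.
move=> cC; pose g x := (- lebRn (row_section C x))%E.
have : lower_semicontinuous g.
  move=> x a; rewrite /g lteNr -EFinN row_sectionE => xa.
  exists [set x' | (a%:E < g x')%E] => //=.
  have := fiber_near_lebRn_lt (@Rhausdorff R) cC (@continuous_lsubmx_coord _ _ _ _ 0 0)
    (@continuous_rsubmx _ _ _ _) xa.
  by apply: filterS => x'; rewrite /= /g lteNr -EFinN row_sectionE.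
move=> /lower_semicontinuous_measurable mg.
have := measurableT_comp (@oppe_measurable _ setT) mg.
by apply: eq_measurable_fun => x _; rewrite /g /= oppeK.
Qed.

Lemma lebRn_compact_monotoneS : lebRn_compact_monotone (1 + m).
Proof.
move=> A B cA cB AB; rewrite !lebRn_row_section; apply: ge0_le_integral => //.
- by move=> x _; exact: lebRn_ge0.
- exact: measurable_lebRn_row_section.
- exact: measurable_lebRn_row_section.
- move=> x _; apply: monotone_m; try exact: compact_row_section.
  by move=> r; apply: AB.
Qed.

(* The sections are bounded by the (compact) projection of [C] to the last [m]
   coordinates, and vanish off the (compact) projection to the first one. *)
Lemma lebRn_compact_finiteS : lebRn_compact_finite (1 + m).
Proof.
move=> C cC; rewrite lebRn_row_section.
pose P := (fun y : 'rV[R]_(1 + m) => lsubmx y 0 0) @` C.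
have cP : compact P.
  by apply: continuous_compact => //; exact/continuous_subspaceT/continuous_lsubmx_coord.
have cQ : compact (rsubmx @` C).
  by apply: continuous_compact => //; exact/continuous_subspaceT/continuous_rsubmx.
pose M := lebRn (rsubmx @` C).
have Mfin : M \is a fin_num by rewrite ge0_fin_numE ?lebRn_ge0 //; exact: finite_m.
have sectionM x : (lebRn (row_section C x) <= M)%E.
  apply: monotone_m => //; first exact: compact_row_section.
  by move=> r Cr; exists (row_mx x%:M r); rewrite ?row_mxKr.
have -> : (\int[leb]_x lebRn (row_section C x) = \int[leb]_(x in P) lebRn (row_section C x))%E.
  rewrite [RHS]integral_mkcond; apply: eq_integral => x _; rewrite /patch.
  case: ifPn => // /negP; rewrite in_setE => Px.
  by rewrite row_sectionE fiber_set0 ?lebRn0.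
apply: (@le_lt_trans _ _ (\int[leb]_(x in P) (cst M) x)%E).
  apply: ge0_le_integral => //; first exact: compact_measurable.
  - by move=> x _; exact: lebRn_ge0.
  - exact: measurable_funS (measurable_lebRn_row_section cC).
rewrite integral_cst; last exact: compact_measurable.
by apply: lte_mul_pinfty => //; [exact: lebRn_ge0 | exact: compact_finite_measure].
Qed.

Lemma lebRn_compact_cvgS : lebRn_compact_cvg (1 + m).
Proof.
move=> C_ cC decC; rewrite lebRn_row_section.
under eq_fun => k do rewrite lebRn_row_section.
have sub0 k : C_ k `<=` C_ 0%N.
  by elim: k => // k IH; exact: subset_trans (decC k) IH.
apply: (@dominated_cvg _ _ _ leb setT measurableT _ _
  (fun x => lebRn (row_section (C_ 0%N) x))).
- by move=> k; exact: measurable_lebRn_row_section.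
- move=> x _; have -> : row_section (\bigcap_k C_ k) x = \bigcap_k row_section (C_ k) x.
    by apply/seteqP; split.
  apply: cvg_m; first by move=> k; exact: compact_row_section.
  by move=> k r; apply: decC.
- by move=> x _; rewrite ge0_fin_numE ?lebRn_ge0 //; apply/finite_m/compact_row_section.
- apply/integrableP; split; first exact: measurable_lebRn_row_section.
  under eq_integral => x _ do rewrite gee0_abs ?lebRn_ge0 //.
  by rewrite -lebRn_row_section; exact: lebRn_compact_finiteS.
- move=> k x _; rewrite gee0_abs ?lebRn_ge0 //.
  by apply: monotone_m; try exact: compact_row_section; move=> r; apply: sub0.
Qed.

End induction_step.

Lemma lebRn_compact0 :
  [/\ lebRn_compact_finite 0, lebRn_compact_monotone 0 & lebRn_compact_cvg 0].
Proof.
split=> [C _|A B _ _ AB|C_ _ decC]; rewrite ?lebRn_dim0.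
- exact: ltey.
- by rewrite lee_fin ler_nat; case: (boolP (_ \in A)) => [/set_mem/AB/mem_set ->|].
- apply: cvg_near_cst.
  have [Cx|nCx] := pselect ((\bigcap_k C_ k) (to_row [tuple])).
    by apply: nearW => k; rewrite lebRn_dim0 (mem_set Cx) (mem_set (Cx k I)).
  have [k0 nCk0] : exists k0, ~ C_ k0 (to_row [tuple]).
    by apply: contrapT => /forallNP nC; apply: nCx => k _; exact: contrapT.
  near=> k; rewrite lebRn_dim0 (memNset nCx) memNset //; apply: contra_not nCk0.
  have : (k0 <= k)%N by near: k; exact: nbhs_infty_ge.
  move=> /subnK <-; elim: (k - k0)%N => [|d IH]; first by rewrite add0n.
  by rewrite addSn => /decC; exact: IH.
Unshelve. all: end_near. Qed.

Lemma lebRn_compact n :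
  [/\ lebRn_compact_finite n, lebRn_compact_monotone n & lebRn_compact_cvg n].
Proof.
elim: n => [|m [fin mono cvg]]; first exact: lebRn_compact0.
split; [exact: lebRn_compact_finiteS | exact: lebRn_compact_monotoneS |].
exact: lebRn_compact_cvgS.
Qed.
End lebRn_compact.

Section stable_sampling.
Variables (R : realType) (n : nat).
Implicit Types (S L : set 'rV[R]_n) (Fr Fi : 'rV[R]_n -> R).

Lemma intRn_sub (D D' : set 'rV[R]_n) (f : 'rV[R]_n -> \bar R) : D `<=` D' ->
  (forall w, D' w -> ~ D w -> f w = 0%E) -> intRn D' f = intRn D f.
Proof.
move=> DD' f0; rewrite /intRn /integral.
suff -> : (f \o @to_row R n) \_ (@to_row R n @^-1` D') =
          (f \o @to_row R n) \_ (@to_row R n @^-1` D) by [].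
apply/funext => x; rewrite /patch; case: ifPn => [/set_mem D'x|]; case: ifPn => //.
- by move=> /negP; rewrite in_setE => Dx; exact: f0.
- by move=> /set_mem/DD' D'x /negP; rewrite in_setE.
Qed.

Lemma L2_supported_in_sub S S' Fr Fi : S `<=` S' ->
  L2_supported_in S Fr Fi -> L2_supported_in S' Fr Fi.
Proof. by move=> SS' [mr mi F0 fin]; split => // w S'w; apply: F0 => /SS'. Qed.

Lemma pw_abs2_sub S S' Fr Fi : S `<=` S' -> L2_supported_in S Fr Fi ->
  pw_abs2 S' Fr Fi = pw_abs2 S Fr Fi.
Proof.
move=> SS' [_ _ F0 _]; apply/funext => x; rewrite /pw_abs2 /pw_re /pw_im.
by rewrite !(intRn_sub SS') // => w _ /F0[-> ->]; rewrite !mul0r ?subr0 ?addr0.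
Qed.

Lemma pw_abs2_ge0 S Fr Fi x : 0 <= pw_abs2 S Fr Fi x.
Proof. by rewrite /pw_abs2 addr_ge0 // sqr_ge0. Qed.

(* [intRn] integrates against [lebn], which is not known to be a measure, so the
   nonnegativity of the norm is read off the upper sampling bound instead. *)
Lemma stable_sampling_sub S S' L (A B A' B' : R) : S `<=` S' -> 0 < B ->
  A' <= A -> B <= B' -> stable_sampling S' L A B -> stable_sampling S L A' B'.
Proof.
move=> SS' B0 AA' BB' ssS' Fr Fi FS.
have := ssS' Fr Fi (L2_supported_in_sub SS' FS).
cbv zeta; rewrite (pw_abs2_sub SS' FS) => -[lower upper].
have sm0 : (0 <= \esum_(l in L) (pw_abs2 S Fr Fi l)%:E)%E.
  by apply: esum_ge0 => x _; rewrite lee_fin pw_abs2_ge0.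
have nf0 : (0 <= intRn [set: 'rV[R]_n] (fun x => (pw_abs2 S Fr Fi x)%:E))%E.
  by rewrite -(@pmule_rge0 _ B%:E) ?lte_fin //; exact: le_trans upper.
split; first by apply: le_trans lower; rewrite lee_wpmul2r ?lee_fin.
by apply: le_trans upper _; rewrite lee_wpmul2r ?lee_fin.
Qed.

End stable_sampling.

Section uniform_bounds.
Variables (R : realType) (n : nat).

Lemma near0_inv_bounds (A B : R) : 0 < A -> A <= B ->
  \forall i \near 0^'+, [/\ 0 < i, i <= A, B <= i^-1 & i <= 1].
Proof.
move=> A0 AB; have B0 : 0 < B by exact: lt_le_trans AB.
near=> i; have i0 : 0 < i by near: i; exact: nbhs_right_gt.
split => //; [near: i; exact: nbhs_right_le| |near: i; exact: nbhs_right_le].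
rewrite -[B]invrK lef_pV2 ?posrE ?invr_gt0 //.
by near: i; apply: nbhs_right_le; rewrite invr_gt0.
Unshelve. all: end_near. Qed.

(* Bounds valid near every point of a compact set are made uniform by
   parametrising them as [i] and [i^-1] with [i] small. *)
Lemma compact_stable_sampling (T : topologicalType) (K : set T)
    (S : T -> set 'rV[R]_n) (L : set 'rV[R]_n) : compact K ->
  (forall t, K t -> exists A B : R, [/\ 0 < A, A <= B &
    \forall t' \near t, stable_sampling (S t') L A B]) ->
  exists A B : R, [/\ 0 < A, A <= B & forall t, K t -> stable_sampling (S t) L A B].
Proof.
move=> cK near_bounds.
pose Q (i : R) t := stable_sampling (S t) L i i^-1.
have : \forall i \near 0^'+, K `<=` Q i.
  apply: ((compact_near_coveringP K).1 cK R (0^'+) Q) => t Kt.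
  have [A [B [A0 AB ssA]]] := near_bounds t Kt.
  exists ([set t' | stable_sampling (S t') L A B],
          [set i | [/\ 0 < i, i <= A, B <= i^-1 & i <= 1]]).
    by split; [exact: ssA | exact: near0_inv_bounds].
  move=> [t' i] [/= ssAB [i0 iA Bi _]].
  exact: stable_sampling_sub (@subset_refl _ _) (lt_le_trans A0 AB) iA Bi ssAB.
move=> cover; have [i [Qi [i0 _ _ i1]]] := @filter_ex _ _ (at_right_proper_filter 0) _
  (filterI cover (near0_inv_bounds ltr01 (lexx 1))).
by exists i, i^-1; split => //; rewrite (le_trans i1) // invf_ge1.
Qed.

End uniform_bounds.

Lemma slice_stable_sampling_near (R : realType) n (Om : set 'rV[R]_(n + 1))
    (eta : R) (L : set 'rV[R]_n) t :
  compact Om -> universal_sampling eta L -> (lebRn (slice Om t) < eta%:E)%E ->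
  exists A B : R, [/\ 0 < A, A <= B &
    \forall t' \near t, stable_sampling (slice Om t') L A B].
Proof.
move=> cOm [_ _ univ]; rewrite sliceE => small.
have [_ _ cvg] := lebRn_compact R n.
have [K [cK Keta] near_sub] := fiber_near_sub_small_compact cvg (@Rhausdorff R) cOm
  (@continuous_rsubmx_coord _ _ _ _ 0 0) (@continuous_lsubmx _ _ _ _) small.
have [A [B [A0 AB ssK]]] := univ K cK Keta.
exists A, B; split => //; apply: filterS near_sub => t' sub.
by apply: stable_sampling_sub ssK; rewrite ?sliceE // (lt_le_trans A0 AB).
Qed.

Unset Implicit Arguments.

Theorem proposition3p10 (R : realType) (n : nat)
    (Om : set 'rV[R]_(n + 1)) (eta : R) (L : set 'rV[R]_n) :
  convex_Rn Om -> compact Om ->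
  (ereal_sup [set lebRn (slice Om t) | t in [set: R]] < eta%:E)%E ->
  0 < eta ->
  universal_sampling eta L ->
  exists A B : R, [/\ 0 < A, A <= B &
    forall t : R, stable_sampling (slice Om t) L A B].
Proof.
move=> _ cOm slices_lt eta0 univ.
pose P := (fun y : 'rV[R]_(n + 1) => rsubmx y 0 0) @` Om.
have cP : compact P.
  by apply: continuous_compact => //; exact/continuous_subspaceT/continuous_rsubmx_coord.
have slice_lt t : (lebRn (slice Om t) < eta%:E)%E.
  by apply: le_lt_trans slices_lt; apply: ereal_sup_ubound; exists t.
have [A [B [A0 AB ssP]]] := compact_stable_sampling cP
  (fun t _ => slice_stable_sampling_near cOm univ (slice_lt t)).
have [A' [B' [A'0 AB' ss0]]] : exists A B : R, [/\ 0 < A, A <= B &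
    stable_sampling (set0 : set 'rV[R]_n) L A B].
  by case: univ => _ _; apply; [exact: compact0 | rewrite lebRn0 lte_fin].
have minA : Num.min A A' <= A by rewrite ge_min lexx.
have minA' : Num.min A A' <= A' by rewrite ge_min lexx orbT.
have maxB : B <= Num.max B B' by rewrite le_max lexx.
have maxB' : B' <= Num.max B B' by rewrite le_max lexx orbT.
exists (Num.min A A'), (Num.max B B'); split; first by rewrite lt_min A0.
  exact: le_trans minA (le_trans AB maxB).
move=> t; have [Pt|nPt] := pselect (P t).
  apply: stable_sampling_sub (ssP t Pt) => //; exact: lt_le_trans A0 AB.
apply: stable_sampling_sub ss0 => //; last exact: lt_le_trans A'0 AB'.
by rewrite sliceE fiber_set0.
Qed.
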